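(* Let $\Gamma$ be an abelian group containing no element of order two. Let $M_1,M_2$ be matroids on a common ground set $E$, $\psi\colon E\to\Gamma$ a labeling, and $B$ a common basis of $M_1$ and $M_2$. If $C$ is a directed cycle of $D_{M_1,M_2}(B)$ with $\psi'(C)\neq 0$ such that no directed cycle $C'$ of $D_{M_1,M_2}(B)$ with $\psi'(C')\ne 0$ satisfies $V(C')\subsetneq V(C)$, then $B\triangle V(C)$ is a common basis of $M_1$ and $M_2$.
   Context: $\psi(S):=\sum_{x\in S}\psi(x)$. For a common basis $B$ of $M_1,M_2$, the digraph $D_{M_1,M_2}(B)$ has vertex set $E$ and arcs: for each $x\in B$, $y\in E\setminus B$ with $B-x+y$ a basis of $M_1$, an arc $xy$ with label $\psi'(xy):=\psi(y)$; and for each $x\in B$, $y\in E\setminus B$ with $B-x+y$ a basis of $M_2$, an arc $yx$ with label $\psi'(yx):=-\psi(x)$. The label $\psi'(C)$ of a directed cycle is the sum of the labels of its arcs; $C$ is non-zero if $\psi'(C)\neq0$. *)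

From HB Require Import structures.
From mathcomp Require Import all_boot all_order all_algebra.
Set Implicit Arguments. Unset Strict Implicit. Unset Printing Implicit Defensive.
Import GRing.Theory.
Local Open Scope ring_scope.

Definition matroid_bases (E : finType) (Bs : {set {set E}}) : Prop :=
  Bs != set0 /\
  forall B1 B2, B1 \in Bs -> B2 \in Bs ->
    forall x, x \in B1 :\: B2 ->
      exists2 y, y \in B2 :\: B1 & (y |: (B1 :\ x)) \in Bs.

Definition common_basis (E : finType) (M1 M2 : {set {set E}}) (B : {set E}) :=
  (B \in M1) && (B \in M2).

(* Arcs of D_{M1,M2}(B): x y with x in B, y notin B, B-x+y basis of M1;
   y x with x in B, y notin B, B-x+y basis of M2. *)
Definition exch_arc (E : finType) (M1 M2 : {set {set E}}) (B : {set E}) : rel E :=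
  fun u v =>
    ((u \in B) && (v \notin B) && ((v |: (B :\ u)) \in M1))
 || ((v \in B) && (u \notin B) && ((u |: (B :\ v)) \in M2)).

(* Labels psi': arc x y (x in B) gets psi y; arc y x (x in B) gets - psi x. *)
Definition arc_label (E : finType) (G : zmodType) (psi : E -> G) (B : {set E})
  (u v : E) : G := if u \in B then psi v else - psi v.

(* A directed cycle, given by its (nonempty, repetition-free) cyclic
   sequence of vertices v0 v1 ... v_{k-1}, with arcs v_i v_{i+1} and v_{k-1} v0. *)
Definition dicycle (E : finType) (M1 M2 : {set {set E}}) (B : {set E}) (s : seq E) :=
  [&& s != [::], uniq s & cycle (exch_arc M1 M2 B) s].

Definition cycle_label (E : finType) (G : zmodType) (psi : E -> G) (B : {set E})
  (s : seq E) : G :=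
  \sum_(p <- zip s (rot 1 s)) arc_label psi B p.1 p.2.

Definition cycle_vertices (E : finType) (s : seq E) : {set E} := [set x in s].

Definition symdiff (E : finType) (A C : {set E}) : {set E} := (A :\: C) :|: (C :\: A).

(* The label of an arc of D(B) depends only on its head, so the label of a
   closed walk is a sum of vertex labels counted with multiplicity. By
   minimality, every dicycle on a proper subset of V(C) has label 0; cutting
   closed walks at repeated vertices, a closed walk inside V(C) that visits some
   vertex of C at most once has label 0 or psi'(C).
   Suppose B - (C ∩ B) + (C \ B) is not a basis of M1. An exchange argument for
   the family of single exchanges x -> next_C x (x in C ∩ B) then shows that some
   of these exchanges can be rotated along a cycle, which yields a permutation
   tau of V(C), different from the successor map of C, whose steps are arcs of
   D(B). Following C from a vertex x moved by tau up to tau x, and then the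
   tau-orbit of x back to x, gives a closed walk of label 2 psi'(C); hence
   2 psi'(C) is 0 or psi'(C), and psi'(C) = 0 since Gamma has no element of
   order two. Reversing C exchanges the roles of M1 and M2. *)

From HB Require Import structures.
From mathcomp Require Import all_boot all_order all_algebra.
From mathcomp Require Import zify.
Set Implicit Arguments. Unset Strict Implicit. Unset Printing Implicit Defensive.
Import GRing.Theory.
Local Open Scope ring_scope.

Lemma not_uniq_split (T : eqType) (s : seq T) :
  ~~ uniq s -> exists x p1 p2 p3, s = p1 ++ x :: p2 ++ x :: p3.
Proof.
elim: s => [|y s IH] //=; rewrite negb_and negbK; case/orP => [ys|/IH].
  by case/splitPr: ys => p2 p3; exists y, [::], p2, p3.
by case=> x [p1 [p2 [p3 ->]]]; exists x, (y :: p1), p2, p3.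
Qed.

Lemma cycle_split_repeat (T : eqType) (e : rel T) s : cycle e s -> ~~ uniq s ->
  exists x p q, [/\ perm_eq s (x :: p ++ x :: q), cycle e (x :: p) & cycle e (x :: q)].
Proof.
move=> cs /not_uniq_split [x [p1 [p [p3 sE]]]]; exists x, p, (p3 ++ p1).
have rE : rot (size p1) s = x :: p ++ x :: (p3 ++ p1) by rewrite sE rot_size_cat /= -catA.
have := cs; rewrite -(rot_cycle (size p1)) rE /cycle rcons_cat cat_path /=.
case/andP => hp /andP[hx hq]; split=> //; first by rewrite -rE perm_sym perm_rot.
by rewrite rcons_path hp hx.
Qed.

Lemma fcycle_in (T : finType) (g : T -> T) (X : {set T}) x1 :
  x1 \in X -> {in X, forall x, g x \in X} ->
  exists Z : seq T, [/\ Z != [::], uniq Z, {subset Z <= X} & fcycle g Z].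
Proof.
move=> x1X gX.
have /trajectP [i lti Ei] := looping_order g x1.
set c := iter i g x1.
have [d dE] : exists d, order g x1 = (i + d.+1)%N by exists (order g x1 - i).-1; lia.
have cE : iter d.+1 g c = c by rewrite /c -iterD addnC -dE Ei.
exists (traject g c d.+1); split => //.
- by have := orbit_uniq g x1; rewrite /orbit dE trajectD cat_uniq => /and3P[].
- by move=> y /trajectP [j _ ->]; rewrite /c -iterD; apply: iter_in.
rewrite trajectS /= (_ : rcons _ c = traject g (g c) d.+1); first exact: fpath_traject.
by rewrite trajectSr -iterSr cE.
Qed.

Lemma orbit_subset (T : finType) (f : T -> T) (pT : predType T) (S : pT) z :
  {in S, forall v, f v \in S} -> z \in S -> {subset orbit f z <= S}.
Proof. by move=> fS zS y /trajectP [i _ ->]; apply: iter_in. Qed.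

Lemma orbit_pred (T : finType) (f : T -> T) z y :
  injective f -> f y \in orbit f z -> y \in orbit f z.
Proof.
move=> injf; rewrite -!fconnect_orbit => h.
by rewrite fconnect_sym // (connect_trans (fconnect1 f y)) // fconnect_sym.
Qed.

Lemma orbit_consS (T : finType) (f : T -> T) x : injective f ->
  f x != x -> exists o, orbit f x = x :: f x :: o.
Proof.
move=> /cycle_orbit/(_ x); rewrite /orbit -orderSpred.
case: (order f x).-1 => [|k] /=; last by exists (traject f (f (f x)) k).
by rewrite andbT => ->.
Qed.

Section ExchangeGraph.

Variables (E : finType) (M1 M2 : {set {set E}}) (B : {set E}).

Lemma exch_arc_irrefl : irreflexive (exch_arc M1 M2 B).
Proof. by move=> x; rewrite /exch_arc; case: (x \in B); rewrite ?andbF. Qed.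

Lemma exch_arc_out u v :
  exch_arc M1 M2 B u v -> u \in B -> (v \notin B) && (v |: (B :\ u) \in M1).
Proof.
rewrite /exch_arc => /orP[/andP[/andP[_ ->] ->] // | /andP[/andP[_ uB] _]].
by rewrite (negbTE uB).
Qed.

Lemma exch_arc_in u v : exch_arc M1 M2 B u v -> u \notin B -> v \in B.
Proof.
rewrite /exch_arc => /orP[/andP[/andP[uB _] _] | /andP[/andP[-> _] _]] //.
by rewrite uB.
Qed.

Lemma exch_arc_sym u v : exch_arc M2 M1 B u v = exch_arc M1 M2 B v u.
Proof. by rewrite /exch_arc orbC. Qed.

Lemma dicycle_rev s : dicycle M2 M1 B (rev s) = dicycle M1 M2 B s.
Proof.
rewrite /dicycle rev_uniq -!size_eq0 size_rev rev_cycle.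
by congr [&& _, _ & _]; apply: eq_cycle => u v; rewrite exch_arc_sym.
Qed.

Variables (G : zmodType) (psi : E -> G).

Definition vertex_label (v : E) : G := if v \in B then - psi v else psi v.

Lemma arc_label_head u v :
  exch_arc M1 M2 B u v -> arc_label psi B u v = vertex_label v.
Proof.
rewrite /exch_arc /arc_label /vertex_label.
by case/orP => /andP[/andP[hu hv] _]; rewrite hu (negbTE hv).
Qed.

Lemma path_labelE x t : path (exch_arc M1 M2 B) x t ->
  \sum_(p <- zip (belast x t) t) arc_label psi B p.1 p.2 = \sum_(v <- t) vertex_label v.
Proof.
elim: t x => [|y t IH] x /=; first by rewrite !big_nil.
by case/andP => hxy hp; rewrite !big_cons /= (arc_label_head hxy) IH.
Qed.

Lemma cycle_labelE s : cycle (exch_arc M1 M2 B) s ->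
  cycle_label psi B s = \sum_(v <- s) vertex_label v.
Proof.
case: s => [|x s]; first by rewrite /cycle_label !big_nil.
rewrite /cycle /cycle_label rot1_cons => hp.
by rewrite -{1}(belast_rcons x s x) (path_labelE hp) big_rcons big_cons addrC.
Qed.

End ExchangeGraph.

Lemma cycle_label_rev (E : finType) (G : zmodType) (M1 M2 : {set {set E}}) B (psi : E -> G) s :
  dicycle M1 M2 B s -> cycle_label psi B (rev s) = cycle_label psi B s.
Proof.
move=> hs; have /and3P[_ _ cs] := hs; rewrite -dicycle_rev in hs.
have /and3P[_ _ cs'] := hs.
by rewrite (cycle_labelE psi cs') (cycle_labelE psi cs) (perm_big _ (permEl (perm_rev s))).
Qed.

Lemma cycle_vertices_rev (E : finType) (s : seq E) :
  cycle_vertices (rev s) = cycle_vertices s.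
Proof. by apply/setP => x; rewrite !inE mem_rev. Qed.

(* Proves an equality of finite sets elementwise, by comparing the element with
   every point it is tested against; the needed distinctness facts must be in
   the context in the form [(u == v) = false]. *)
Ltac case_set_eq :=
  let z := fresh "z" in
  apply/setP => z; rewrite !inE;
  repeat match goal with |- context [z == ?y] => have [->|?] := eqVneq z y end;
  repeat match goal with
  | H : (?u == ?v) = false |- context [?u == ?v] => rewrite H
  | H : (?u == ?v) = false |- context [?v == ?u] => rewrite (eq_sym v u) H
  | H : is_true (?u \in ?S) |- context [?u \in ?S] => rewrite H
  | H : is_true (?u \notin ?S) |- context [?u \in ?S] => rewrite (negbTE H)
  | |- context [?u == ?u] => rewrite eqxx
  end;
  rewrite /= ?andbT ?andbF ?orbF ?orbT //.

Section BasisExchange.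

Variables (E : finType) (M : {set {set E}}).
Hypothesis hM : matroid_bases M.

Section TwoExchanges.

Variables (B : {set E}) (x0 x a0 a : E).
Hypotheses (x0B : x0 \in B) (xB : x \in B) (a0B : a0 \notin B) (aB : a \notin B).
Hypotheses (x0x : (x0 == x) = false) (a0a : (a0 == a) = false).
Hypothesis a_x0 : a |: (B :\ x0) \notin M.

Let x0a : (x0 == a) = false. Proof. by apply: contraNF aB => /eqP <-. Qed.
Let x0a0 : (x0 == a0) = false. Proof. by apply: contraNF a0B => /eqP <-. Qed.
Let xa : (x == a) = false. Proof. by apply: contraNF aB => /eqP <-. Qed.
Let xa0 : (x == a0) = false. Proof. by apply: contraNF a0B => /eqP <-. Qed.

Lemma exchange_after_exchange :
  a0 |: (B :\ x0) \in M -> a |: (B :\ x) \in M -> a |: ((a0 |: (B :\ x0)) :\ x) \in M.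
Proof.
move=> h0 h; have [_ ex] := hM.
have := ex _ _ h h0 x0; rewrite !inE eqxx x0a x0a0 x0x x0B => /(_ isT) [y].
rewrite !inE => /andP[yB0 yB] hy.
have [ya0|ya0] := eqVneq y a0.
  by subst y; move: hy; congr (_ \in M); case_set_eq.
move: yB0 yB; rewrite (negbTE ya0) /= => + /andP[_ yB].
rewrite yB andbT negb_or negbK => /andP[_ /eqP yx].
by subst y; case/negP: a_x0; move: hy; congr (_ \in M); case_set_eq.
Qed.

Lemma exchange_before_exchange :
  B \in M -> a |: ((a0 |: (B :\ x0)) :\ x) \in M -> a |: (B :\ x) \in M.
Proof.
move=> hB h; have [_ ex] := hM.
have := ex _ _ h hB a0; rewrite !inE eqxx a0a (eq_sym a0 x) xa0 (negbTE a0B).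
move=> /(_ isT) [y]; rewrite !inE => /andP[yB1 yB] hy.
have [yx0|yx0] := eqVneq y x0.
  by subst y; move: hy; congr (_ \in M); case_set_eq.
have [yx|yx] := eqVneq y x.
  by subst y; case/negP: a_x0; move: hy; congr (_ \in M); case_set_eq.
by move: yB1; rewrite yB (negbTE yx) (negbTE yx0) /= ?orbT ?andbT.
Qed.

End TwoExchanges.

Variable m : E -> E.

Definition exchange_family (B X : {set E}) : Prop :=
  [/\ B \in M, X \subset B, {in X &, injective m},
      {in X, forall x, m x \notin B} & {in X, forall x, m x |: (B :\ x) \in M}].

Definition exchange_rotation (B : {set E}) (Z : seq E) : Prop :=
  [/\ uniq Z, exists2 x, x \in Z & next Z x != x
    & {in Z, forall x, m (next Z x) |: (B :\ x) \in M}].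

Section PeelOff.

Variables (B X : {set E}) (x0 : E).
Hypotheses (hBX : exchange_family B X) (x0X : x0 \in X).
(* No other partner can replace x0, so the exchange of x0 can be done first. *)
Hypothesis x0_sink : {in X, forall y, y != x0 -> m y |: (B :\ x0) \notin M}.

Let B1 := m x0 |: (B :\ x0).

Let X1P y : y \in X :\ x0 -> [/\ y \in X, (y == x0) = false & y \in B].
Proof.
case: hBX => _ XB _ _ _.
by rewrite !inE => /andP[yx0 yX]; rewrite yX (subsetP XB) // (negbTE yx0).
Qed.

Let m_x0 y : y \in X :\ x0 -> (m y == m x0) = false.
Proof.
case: hBX => _ _ injm _ _ /X1P[yX yx0 _].
by apply: contraFF yx0 => /eqP/injm -> //.
Qed.

Lemma exchange_family_peel : exchange_family B1 (X :\ x0).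
Proof.
case: hBX => hB XB injm mB mM.
have x0B : x0 \in B by apply: (subsetP XB).
split; first exact: mM.
- by apply/subsetP => y /X1P[_ yx0 yB]; rewrite !inE yx0 yB orbT.
- by move=> y z /X1P[yX _ _] /X1P[zX _ _]; apply: injm.
- move=> y yX1; have [yX _ _] := X1P yX1.
  by rewrite !inE m_x0 // (negbTE (mB _ yX)) andbF.
move=> y yX1; have [yX yx0 yB] := X1P yX1.
apply: exchange_after_exchange; rewrite ?mB ?m_x0 ?mM ?x0_sink ?yx0 //.
- by rewrite eq_sym.
- by rewrite eq_sym m_x0.
Qed.

Lemma exchange_rotation_unpeel Z :
  {subset Z <= X :\ x0} -> exchange_rotation B1 Z -> exchange_rotation B Z.
Proof.
case: hBX => hB XB _ mB _ sZ [uZ nZ pZ]; split=> // y yZ.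
have [yX yx0 yB] := X1P (sZ _ yZ).
have [nX nx0 nB] := X1P (sZ _ (etrans (mem_next Z y) yZ)).
apply: (exchange_before_exchange (x0 := x0) (a0 := m x0));
  rewrite ?mB ?m_x0 ?x0_sink ?pZ ?nx0 //.
- exact: (subsetP XB).
- by rewrite eq_sym.
- by rewrite eq_sym m_x0 // sZ ?mem_next.
Qed.

Lemma exchange_image_peel :
  (B1 :\: (X :\ x0)) :|: (m @: (X :\ x0)) = (B :\: X) :|: (m @: X).
Proof.
case: hBX => _ XB _ mB _.
have mX : m x0 \notin X by apply: contra (mB _ x0X) => /(subsetP XB).
have -> : B1 :\: (X :\ x0) = m x0 |: (B :\: X).
  apply/setP => z; rewrite !inE.
  have [->|_] := eqVneq z (m x0); first by rewrite (negbTE mX) andbF.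
  by have [->|] := eqVneq z x0; rewrite ?x0X.
by rewrite -(setD1K x0X) imsetU1 setD1K // setUCA setUA.
Qed.

End PeelOff.

Lemma exchange_rotation_cover (B X : {set E}) x1 :
  x1 \in X ->
  {in X, forall x, exists2 y, y \in X & (y != x) && (m y |: (B :\ x) \in M)} ->
  exists2 Z, {subset Z <= X} & exchange_rotation B Z.
Proof.
move=> x1X cover.
pose g x := odflt x [pick y in X | (y != x) && (m y |: (B :\ x) \in M)].
have hg x : x \in X -> [/\ g x \in X, g x != x & m (g x) |: (B :\ x) \in M].
  move=> xX; rewrite /g; case: pickP => [y /andP[yX /andP[yx h]] // | none].
  by have [y yX hy] := cover x xX; have := none y; rewrite /= yX hy.
have [Z [nZ uZ sZ cZ]] := fcycle_in x1X (fun x xX => let: And3 h _ _ := hg x xX in h).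
have nE x : x \in Z -> next Z x = g x by move=> xZ; rewrite (eqP (next_cycle cZ xZ)).
exists Z => //; split=> // [|x xZ]; last by rewrite nE //; case: (hg x (sZ _ xZ)).
case: Z nZ nE sZ {uZ cZ} => // z Z _ nE sZ.
by exists z; rewrite ?mem_head // nE ?mem_head //; case: (hg z (sZ _ (mem_head _ _))).
Qed.

Lemma exchange_family_basis B X : exchange_family B X ->
  (B :\: X) :|: (m @: X) \in M \/ exists2 Z, {subset Z <= X} & exchange_rotation B Z.
Proof.
move: {2}#|X| (erefl #|X|) => n; elim: n B X => [|n IH] B X cX hBX.
  by left; case: hBX; rewrite (cards0_eq cX) setD0 imset0 setU0.
case: (boolP [exists x0 in X, [forall y in X, (y != x0) ==> (m y |: (B :\ x0) \notin M)]])
  => [/exists_inP [x0 x0X sink] | cover].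
  have {}sink : {in X, forall y, y != x0 -> m y |: (B :\ x0) \notin M}.
    by move=> y yX; have /forall_inP/(_ y yX)/implyP := sink.
  have cX1 : #|X :\ x0| = n by move: cX; rewrite (cardsD1 x0) x0X => -[].
  case: (IH _ _ cX1 (exchange_family_peel hBX x0X sink)) => [|[Z sZ hZ]].
    by rewrite exchange_image_peel //; left.
  right; exists Z; first by move=> y /sZ; rewrite inE => /andP[].
  exact: exchange_rotation_unpeel sZ hZ.
right; have [x1 x1X] : exists x1, x1 \in X by apply/set0Pn; rewrite -card_gt0 cX.
apply: (exchange_rotation_cover x1X) => x xX.
move/exists_inPn: cover => /(_ x xX) /forall_inPn [y yX].
by rewrite negb_imply negbK; exists y.
Qed.

End BasisExchange.

Section MinimalCycle.

Variables (E : finType) (G : zmodType) (M1 M2 : {set {set E}}) (B : {set E}).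
Variables (psi : E -> G) (C : seq E).
Hypothesis hC : dicycle M1 M2 B C.
Hypothesis hmin : forall C' : seq E, dicycle M1 M2 B C' -> cycle_label psi B C' != 0 ->
  ~ (cycle_vertices C' \proper cycle_vertices C).

Local Notation e := (exch_arc M1 M2 B).
Local Notation f := (vertex_label B psi).
Local Notation L := (\sum_(v <- C) f v).

Lemma sub_dicycle_label0 s : dicycle M1 M2 B s -> {subset s <= C} ->
  cycle_vertices s != cycle_vertices C -> \sum_(v <- s) f v = 0.
Proof.
move=> hs sC neq; have /and3P[_ _ cs] := hs.
rewrite -(cycle_labelE psi cs); apply/eqP/negPn/negP => nz.
apply: (hmin hs nz); rewrite properEneq neq.
by apply/subsetP => x; rewrite !inE; apply: sC.
Qed.

(* The first conjunct is needed to carry the induction for the second. *)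
Lemma closed_walk_label s : cycle e s -> {subset s <= C} ->
  ((exists2 v, v \in C & v \notin s) -> \sum_(v <- s) f v = 0) /\
  ((exists2 v, v \in C & (count_mem v s <= 1)%N) ->
     \sum_(v <- s) f v = 0 \/ \sum_(v <- s) f v = L).
Proof.
have /and3P[_ uC _] := hC.
move: {2}(size s).+1 (ltnSn (size s)) => n; elim: n s => // n IH s sz cs sC.
have [us|nus] := boolP (uniq s).
  have [->|ne] := eqVneq s [::]; first by rewrite big_nil; split=> // _; left.
  have hs : dicycle M1 M2 B s by rewrite /dicycle ne us cs.
  have [eqV|neV] := eqVneq (cycle_vertices s) (cycle_vertices C); last first.
    by rewrite sub_dicycle_label0 //; split=> // _; left.
  have memE v : (v \in s) = (v \in C) by move/setP: eqV => /(_ v); rewrite !inE.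
  split=> [[v]|_]; first by rewrite memE => ->.
  by right; rewrite !big_uniq //; apply: eq_bigl => v; rewrite memE.
have [x [p [q [ps cp cq]]]] := cycle_split_repeat cs nus.
move: sz; rewrite (perm_size ps) /= size_cat /= => sz.
have memE v : (v \in s) = (v \in x :: p) || (v \in x :: q).
  by rewrite (perm_mem ps) -cat_cons mem_cat.
have sp : {subset x :: p <= C} by move=> v vp; apply: sC; rewrite memE vp.
have sq : {subset x :: q <= C} by move=> v vq; apply: sC; rewrite memE vq orbT.
have [A1 A2] := IH (x :: p) ltac:(rewrite /=; lia) cp sp.
have [B1 B2] := IH (x :: q) ltac:(rewrite /=; lia) cq sq.
rewrite (perm_big _ ps) -cat_cons big_cat /=; split.
  case=> v vC; rewrite memE negb_or => /andP[vp vq].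
  by rewrite A1 ?B1 ?addr0 //; exists v.
case=> v vC; rewrite (permP ps) -cat_cons count_cat => cv.
have [vp|vp] := boolP (v \in x :: p); last first.
  rewrite A1 ?add0r; last by exists v.
  by apply: B2; exists v; rewrite // (leq_trans _ cv) ?leq_addl.
have cp0 : (0 < count_mem v (x :: p))%N by rewrite -has_count has_pred1.
have /count_memPn vq : count_mem v (x :: q) = 0%N.
  by apply/eqP; rewrite -leqn0 -(leq_add2l (count_mem v (x :: p))) addn0 (leq_trans cv).
rewrite B1 ?addr0; last by exists v.
by apply: A2; exists v; rewrite // (leq_trans _ cv) ?leq_addr.
Qed.

Lemma chord_label0 i x a p y q :
  rot i C = x :: a :: p ++ y :: q -> e x y -> \sum_(v <- x :: y :: q) f v = 0.
Proof.
move=> rE exy; have /and3P[_ uC cC] := hC.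
have uR : uniq (x :: a :: p ++ y :: q) by rewrite -rE rot_uniq.
have memR v : (v \in C) = (v \in x :: a :: p ++ y :: q) by rewrite -rE mem_rot.
have sub : subseq (x :: y :: q) (x :: a :: p ++ y :: q).
  by rewrite -cat1s -[x :: a :: _]cat1s cat_subseq // -cat_cons suffix_subseq.
apply: sub_dicycle_label0.
- apply/and3P; split=> //; first exact: subseq_uniq sub uR.
  have := cC; rewrite -(rot_cycle i) rE /cycle -cat_cons rcons_cat cat_path.
  by case/andP=> _ /= /andP[_ ->]; rewrite exy.
- by move=> v /(mem_subseq sub); rewrite memR.
apply/negP => /eqP/setP/(_ a); rewrite !inE memR !inE eqxx orbT.
move: uR; rewrite /= !inE mem_cat negb_or => /and3P[/andP[xa _] ap _].
by rewrite eq_sym (negbTE xa) /= => h; case/negP: ap; rewrite mem_cat inE h orbT.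
Qed.

Section Permutation.

Variable tau : E -> E.
Hypotheses (tau_inj : injective tau) (tauC : {in C, forall v, tau v \in C}).
Hypothesis tau_arc : {in C, forall v, e v (tau v)}.

Lemma orbit_subC x : x \in C -> {subset orbit tau x <= C}.
Proof. exact: orbit_subset tauC. Qed.

Lemma orbit_dicycle x : x \in C -> dicycle M1 M2 B (orbit tau x).
Proof.
move=> xC; apply/and3P; split; last 2 first.
- exact: orbit_uniq.
- apply: (sub_in_cycle (P := mem C) (e := frel tau)); last exact: cycle_orbit.
    by move=> u v uC _ /eqP <-; apply: tau_arc.
  exact/allP/orbit_subC.
by apply/eqP => o0; have := in_orbit tau x; rewrite o0.
Qed.

(* Peel off tau-orbits: each is a dicycle on a proper subset of V(C). *)
Lemma invariant_label0 (S : {set E}) : S \subset cycle_vertices C ->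
  {in S, forall v, tau v \in S} -> S != cycle_vertices C -> \sum_(v in S) f v = 0.
Proof.
move: {2}#|S| (leqnn #|S|) => n; elim: n S => [|n IH] S cS sSV tS nSV.
  by move: cS; rewrite leqn0 cards_eq0 => /eqP ->; rewrite big_set0.
have [->|[z zS]] := set_0Vmem S; first by rewrite big_set0.
have zC : z \in C by have := subsetP sSV z zS; rewrite inE.
set O := [set v in orbit tau z].
have sOS : O \subset S by apply/subsetP => v; rewrite inE => /(orbit_subset tS zS).
have zO : z \in O by rewrite inE in_orbit.
rewrite (big_setID O) (setIidPr sOS) /=.
have -> : \sum_(v in O) f v = 0.
  rewrite (eq_bigl (mem (orbit tau z))) => [|v]; last by rewrite inE.
  rewrite -big_uniq ?orbit_uniq // sub_dicycle_label0 ?orbit_dicycle //.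
    exact: orbit_subC zC.
  apply: contra nSV => /eqP OC; rewrite eqEsubset sSV /=.
  by apply/subsetP => v; rewrite -OC inE => /(orbit_subset tS zS).
rewrite add0r; apply: IH.
- by move: cS; rewrite cardsD (setIidPr sOS) (cardsD1 z O) zO; lia.
- exact: subset_trans (subsetDl _ _) sSV.
- move=> v; rewrite !inE => /andP[vO vS]; rewrite tS // andbT.
  by apply: contra vO; apply: orbit_pred.
apply: contraTneq zO => SO.
by have := subsetP sSV z zS; rewrite -SO inE => /andP[].
Qed.

Lemma orbit_label x : x \in C -> \sum_(v <- orbit tau x) f v = L.
Proof.
move=> xC; have /and3P[_ uC _] := hC.
set V := cycle_vertices C; set O := [set v in orbit tau x].
have sOV : O \subset V by apply/subsetP => v; rewrite !inE => /(orbit_subC xC).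
have rest : \sum_(v in V :\: O) f v = 0.
  apply: invariant_label0; first exact: subsetDl.
    move=> v; rewrite !inE => /andP[vO vC]; rewrite tauC // andbT.
    by apply: contra vO; apply: orbit_pred.
  by apply/negP => /eqP/setP/(_ x); rewrite !inE xC in_orbit.
rewrite big_uniq ?orbit_uniq // [RHS]big_uniq //.
have -> : \sum_(v in C) f v = \sum_(v in V) f v by apply: eq_bigl => v; rewrite inE.
rewrite (big_setID O) (setIidPr sOV) /= rest addr0.
by apply: eq_bigl => v; rewrite inE.
Qed.

(* Follow C from x to y = tau x, then the tau-orbit of x from y back to x. *)
Lemma detour_label i x a p y q o :
  rot i C = x :: a :: p ++ y :: q -> orbit tau x = x :: y :: o ->
  \sum_(v <- x :: a :: p ++ y :: o) f v = 0 \/ \sum_(v <- x :: a :: p ++ y :: o) f v = L.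
Proof.
move=> rE oE; have /and3P[_ uC cC] := hC.
have xC : x \in C by rewrite -(mem_rot i) rE mem_head.
have uR : uniq (x :: a :: p ++ y :: q) by rewrite -rE rot_uniq.
have uO : uniq (x :: y :: o) by rewrite -oE orbit_uniq.
have cR : cycle e (x :: a :: p ++ y :: o).
  have rcE r : rcons (a :: p ++ y :: r) x = (a :: p) ++ y :: rcons r x.
    by rewrite /= rcons_cat.
  have := cC; rewrite -(rot_cycle i) rE /cycle !rcE !cat_path.
  case/andP=> -> /= /andP[-> _]; have := orbit_dicycle xC.
  by rewrite oE => /and3P[_ _ /= /andP[_ ->]].
have sR : {subset x :: a :: p ++ y :: o <= C}.
  move=> v; rewrite inE -cat_cons mem_cat orbA => /orP[vp|vo].
    by rewrite -(mem_rot i) rE inE -cat_cons mem_cat orbA vp.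
  by apply: (orbit_subC xC); rewrite oE in_cons vo orbT.
have xN : x \notin a :: p ++ y :: o.
  move: uR uO => /andP[xR _] /andP[xO _]; rewrite -cat_cons mem_cat negb_or xO andbT.
  by apply: contra xR; rewrite -cat_cons mem_cat => ->.
have [_ walk] := closed_walk_label cR sR; apply: walk; exists x => //.
by rewrite -cat1s count_cat (count_memPn xN) /= eqxx.
Qed.

Lemma rotation_label0 x : (forall g : G, g + g = 0 -> g = 0) ->
  x \in C -> tau x != next C x -> L = 0.
Proof.
move=> no2tors xC ntx; have /and3P[_ uC _] := hC.
have xy : x != tau x by apply: contraTneq (tau_arc xC) => <-; rewrite exch_arc_irrefl.
have [o oE] : exists o, orbit tau x = x :: tau x :: o.
  by apply: orbit_consS; rewrite // eq_sym.
have [i [|a p] q _ _ rE] := rot_to_arc uC xC (tauC xC) xy.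
  by case/eqP: ntx; rewrite -(next_rot i uC) rE /= eqxx.
have splitC r : \sum_(v <- x :: a :: p ++ tau x :: r) f v =
    \sum_(v <- a :: p) f v + \sum_(v <- x :: tau x :: r) f v.
  rewrite -big_cat; apply/perm_big/permPl.
  exact: (perm_catCA [:: x] (a :: p) (tau x :: r)).
have sumA : \sum_(v <- a :: p) f v = L.
  rewrite -(perm_big _ (permEl (perm_rot i C))) rE splitC.
  by rewrite (chord_label0 rE (tau_arc xC)) addr0.
have := detour_label rE oE; rewrite splitC -oE orbit_label // sumA.
by case=> [/no2tors // | ]; rewrite -[RHS]addr0; exact: addrI.
Qed.

End Permutation.

End MinimalCycle.

Section HalfBasis.

Variables (E : finType) (M1 M2 : {set {set E}}) (B : {set E}) (C : seq E).
Hypothesis hC : dicycle M1 M2 B C.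

Local Notation X := [set v in C | v \in B].

Lemma symdiff_cycleE :
  symdiff B (cycle_vertices C) = (B :\: X) :|: (next C @: X).
Proof.
have /and3P[_ uC cC] := hC; rewrite /symdiff; congr (_ :|: _).
  by apply/setP => z; rewrite !inE; case: (z \in B); rewrite ?andbT ?andbF.
apply/setP => z; rewrite !inE; apply/idP/imsetP => [/andP[zB zC] | [w]].
  exists (prev C z); last by rewrite (next_prev uC).
  rewrite inE mem_prev zC; apply: contraNT zB => pB.
  exact: exch_arc_in (prev_cycle cC zC) pB.
rewrite inE => /andP[wC wB] ->; rewrite mem_next wC.
by rewrite andbT; case/andP: (exch_arc_out (next_cycle cC wC) wB).
Qed.

Lemma exchange_family_cycle : B \in M1 -> exchange_family M1 (next C) B X.
Proof.
have /and3P[_ uC cC] := hC; move=> hB.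
have arcX v : v \in X -> (next C v \notin B) && (next C v |: (B :\ v) \in M1).
  by rewrite inE => /andP[vC vB]; apply: exch_arc_out (next_cycle cC vC) vB.
split=> // [|v w _ _|v /arcX /andP[] //|v /arcX /andP[] //].
  by apply/subsetP => v; rewrite inE => /andP[].
exact: (can_inj (prev_next uC)).
Qed.

Section Rotation.

Variable Z : seq E.
Hypotheses (sZ : {subset Z <= X}) (hZ : exchange_rotation M1 (next C) B Z).

Let tau v := next C (next Z v).

Lemma rotation_injective : injective tau.
Proof.
have /and3P[_ uC _] := hC; have [uZ _ _] := hZ.
exact: inj_comp (can_inj (prev_next uC)) (can_inj (prev_next uZ)).
Qed.

Let next_in_C v : v \in C -> next Z v \in C.
Proof.
move=> vC; have [vZ|vZ] := boolP (v \in Z); last by rewrite next_nth (negbTE vZ).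
by have := sZ (etrans (mem_next Z v) vZ); rewrite inE => /andP[].
Qed.

Lemma rotation_closed : {in C, forall v, tau v \in C}.
Proof. by move=> v /next_in_C; rewrite /tau mem_next. Qed.

Lemma rotation_arc : {in C, forall v, exch_arc M1 M2 B v (tau v)}.
Proof.
have /and3P[_ _ cC] := hC; have [_ _ hM] := hZ.
move=> v vC; have [vZ|vZ] := boolP (v \in Z); last first.
  by rewrite /tau (next_nth Z) (negbTE vZ); apply: next_cycle.
have /sZ := vZ; rewrite inE => /andP[_ vB].
have /sZ := etrans (mem_next Z v) vZ; rewrite inE => /andP[wC wB].
have /andP[tB _] := exch_arc_out (next_cycle cC wC) wB.
by rewrite /exch_arc vB tB hM.
Qed.

Lemma rotation_moves : exists2 x, x \in C & tau x != next C x.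
Proof.
have /and3P[_ uC _] := hC; have [_ [x xZ nZx] _] := hZ.
exists x; first by have := sZ xZ; rewrite inE => /andP[].
by rewrite /tau (inj_eq (can_inj (prev_next uC))).
Qed.

End Rotation.

Lemma symdiff_cycle_basis (G : zmodType) (psi : E -> G) :
  (forall g : G, g + g = 0 -> g = 0) -> matroid_bases M1 -> B \in M1 ->
  cycle_label psi B C != 0 ->
  (forall C', dicycle M1 M2 B C' -> cycle_label psi B C' != 0 ->
     ~ (cycle_vertices C' \proper cycle_vertices C)) ->
  symdiff B (cycle_vertices C) \in M1.
Proof.
move=> no2tors hM1 hB hCnz hmin; rewrite symdiff_cycleE.
case: (exchange_family_basis hM1 (exchange_family_cycle hB)) => // [[Z sZ hZ]].
have [x xC ntx] := rotation_moves sZ hZ.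
have L0 := rotation_label0 hC hmin (rotation_injective hZ) (rotation_closed sZ)
  (rotation_arc sZ hZ) no2tors xC ntx.
by move: hCnz; have /and3P[_ _ cC] := hC; rewrite (cycle_labelE psi cC) L0 eqxx.
Qed.

End HalfBasis.

Theorem lemma3p7 (G : zmodType)
  (no2tors : forall g : G, g + g = 0 -> g = 0)
  (E : finType) (M1 M2 : {set {set E}})
  (hM1 : matroid_bases M1) (hM2 : matroid_bases M2)
  (psi : E -> G) (B : {set E}) (hB : common_basis M1 M2 B)
  (C : seq E) (hC : dicycle M1 M2 B C) (hCnz : cycle_label psi B C != 0)
  (hmin : forall C' : seq E, dicycle M1 M2 B C' -> cycle_label psi B C' != 0 ->
            ~ (cycle_vertices C' \proper cycle_vertices C)) :
  common_basis M1 M2 (symdiff B (cycle_vertices C)).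
Proof.
have /andP[hB1 hB2] := hB.
rewrite /common_basis (symdiff_cycle_basis hC no2tors hM1 hB1 hCnz hmin) /=.
have hCrev : dicycle M2 M1 B (rev C) by rewrite dicycle_rev.
rewrite -cycle_vertices_rev (symdiff_cycle_basis hCrev (psi := psi) no2tors hM2 hB2) //.
  by rewrite (cycle_label_rev psi hC).
move=> C' hC' nz; rewrite cycle_vertices_rev -(cycle_vertices_rev C').
apply: hmin; first by rewrite -dicycle_rev revK.
by rewrite (cycle_label_rev psi hC').
Qed.
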